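(* There is an absolute constant $C>0$ such that the following holds. Let $G(V,E)$ be a graph with nonnegative edge weights $w$, let $k\ge c\ge 2$ be integers, let $G^{(1)},\ldots,G^{(k)}$ be a random $k$-clustering of $G$ with expected multiplicity $c$, let $\pi$ be a permutation of $E$ in non-increasing order of weight, $M_i:=\mathsf{Greedy}(G^{(i)},\pi)$, and $H$ the graph on $V$ with edge set $\bigcup_i M_i$. Fix a maximum weight matching $M^*$ of $G$, and let $F_1\subseteq M^*$ be the set of edges $e\in M^*$ that are free for machine $1$ (no endpoint of $e$ is matched by $\mathsf{Greedy}(G^{(1)},\pi^{<e})$), and $F'_1:=F_1\cap E(H)$. Then $$\mathbb{E}[w(F'_1)] \geq \mathbb{E}[w(F_1)] - C\cdot\frac{\log c}{c}\cdot \mathrm{opt}(G).$$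
   Context: $\mathrm{opt}(G)$ is the weight of a maximum weight matching; $w(S)$ is the total weight of an edge set $S$. $\mathsf{Greedy}(G,\pi)$ scans the edges of $G$ in order $\pi$ and adds $(u,v)$ iff neither endpoint is matched; $\mathsf{Greedy}(G^{(1)},\pi^{<e})$ means running it on $G^{(1)}$ and stopping just before processing $e$. A random $k$-clustering with expected multiplicity $c$: independently for each edge $e$, draw $c_e\sim\mathrm{Bin}(k,c/k)$ and place $e$ in $c_e$ distinct uniformly random sets among $E^{(1)},\ldots,E^{(k)}$; $G^{(i)}=G(V,E^{(i)})$. Expectations are over the random clustering. *)

From HB Require Import structures.
From mathcomp Require Import all_boot all_order all_algebra.
From mathcomp Require Import Rstruct.
From Stdlib Require Rpower.
From Stdlib Require Import Rdefinitions.
Set Implicit Arguments. Unset Strict Implicit. Unset Printing Implicit Defensive.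
Import Order.TTheory GRing.Theory Num.Theory.
Local Open Scope ring_scope.

Section Defs.
Variable V : finType.

Definition simple_graph (E : {set {set V}}) : Prop :=
  forall e, e \in E -> #|e| = 2%N.

Definition wt (w : {set V} -> R) (S : {set {set V}}) : R := \sum_(e in S) w e.

Definition is_matching (E M : {set {set V}}) : bool := (M \subset E) && trivIset M.

Definition opt (E : {set {set V}}) (w : {set V} -> R) : R :=
  \big[Num.max/0]_(M : {set {set V}} | is_matching E M) wt w M.

Definition is_max_weight_matching (E : {set {set V}}) (w : {set V} -> R)
  (M : {set {set V}}) : Prop :=
  is_matching E M /\ forall M', is_matching E M' -> wt w M' <= wt w M.

Definition nonincreasing_order (E : {set {set V}}) (w : {set V} -> R)
  (pi : seq {set V}) : Prop :=
  [/\ uniq pi, pi =i E & sorted (fun a b => w b <= w a) pi].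

Definition greedy (A : {set {set V}}) (s : seq {set V}) : {set {set V}} :=
  foldl (fun M e => if (e \in A) && [disjoint e & cover M] then e |: M else M)
        set0 s.

Definition greedy_before (A : {set {set V}}) (pi : seq {set V}) (e : {set V}) :=
  greedy A (take (index e pi) pi).

Variable k : nat.

(* A k-clustering: each edge is assigned the set of machines containing it. *)
Definition clustering := {ffun {set V} -> {set 'I_k}}.

Definition machine_edges (E : {set {set V}}) (X : clustering) (i : 'I_k) :=
  [set e in E | i \in X e].

(* Probability that an edge is put into exactly the machine set S:
   c_e ~ Bin(k, c/k), then a uniformly random c_e-subset of the k machines. *)
Definition binom_pmf (p : R) (s : nat) : R :=
  ('C(k, s))%:R * p ^+ s * (1 - p) ^+ (k - s).

Definition edge_set_prob (c : nat) (S : {set 'I_k}) : R :=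
  binom_pmf (c%:R / k%:R) #|S| / ('C(k, #|S|))%:R.

(* Law of the random k-clustering with expected multiplicity c (independent
   over edges of E; edges outside E are in no machine). *)
Definition clustering_prob (E : {set {set V}}) (c : nat) (X : clustering) : R :=
  (\prod_(e in E) edge_set_prob c (X e)) *
  (\prod_(e in ~: E) (X e == set0)%:R).

Definition Exp (E : {set {set V}}) (c : nat) (f : clustering -> R) : R :=
  \sum_(X : clustering) clustering_prob E c X * f X.

Definition H_edges (E : {set {set V}}) (pi : seq {set V}) (X : clustering) :=
  \bigcup_(i : 'I_k) greedy (machine_edges E X i) pi.

Definition free_edges (E : {set {set V}}) (pi : seq {set V}) (Mstar : {set {set V}})
  (X : clustering) (i : 'I_k) :=
  [set e in Mstar | [disjoint e & cover (greedy_before (machine_edges E X i) pi e)]].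

End Defs.

(* Fix e in Mstar.  If e is free for machine 1 but missing from H, then e is
   not assigned to machine 1, and no machine i both receives e and has e free
   (Greedy on G^(i) would then take e).  Whether e is free for a machine only
   depends on the edges scanned before e, so it is independent of whether the
   machine receives e; and the law of the clustering makes the machines
   independent, each receiving e with probability p = c/k.  With S the
   probability that e is free for a machine, the event has probability at most
   (1 - p) S (1 - p S)^(k-1) <= 2/c.  Summing over Mstar gives
   E[w(F_1)] - E[w(F'_1)] <= 2 w(Mstar) / c <= 4 (ln c / c) opt(G). *)

From HB Require Import structures.
From mathcomp Require Import all_boot all_order all_algebra.
From mathcomp Require Import Rstruct.
From Stdlib Require Rpower.
From Stdlib Require Import Rdefinitions.
From mathcomp Require Import ring lra.
Set Implicit Arguments. Unset Strict Implicit. Unset Printing Implicit Defensive.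
Import Order.TTheory GRing.Theory Num.Theory.
Local Open Scope ring_scope.

Local Notation edge_ind V := {ffun {set V} -> bool}.

Section Greedy.
Variable V : finType.
Implicit Types (A B M : {set {set V}}) (s : seq {set V}) (e : {set V}).

Definition greedy_step A M e :=
  if (e \in A) && [disjoint e & cover M] then e |: M else M.

Lemma greedyE A s : greedy A s = foldl (greedy_step A) set0 s.
Proof. by []. Qed.

Lemma foldl_greedy_step_sup A M s : M \subset foldl (greedy_step A) M s.
Proof.
elim: s M => [|e s IHs] M /=; first exact: subxx.
apply: subset_trans (IHs _); rewrite /greedy_step; case: ifP => // _.
exact: subsetUr.
Qed.

Lemma mem_greedy A s e :
  e \in s -> e \in A -> [disjoint e & cover (greedy A (take (index e s) s))] ->
  e \in greedy A s.
Proof.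
move=> es eA e_free.
rewrite -(cat_take_drop (index e s) s) (drop_nth e) ?index_mem //.
rewrite nth_index // greedyE foldl_cat /=.
apply: (subsetP (foldl_greedy_step_sup _ _ _)).
by rewrite -greedyE /greedy_step eA e_free setU11.
Qed.

Lemma eq_in_greedy A B s :
  {in s, forall f, (f \in A) = (f \in B)} -> greedy A s = greedy B s.
Proof.
rewrite !greedyE; elim: s (set0 : {set {set V}}) => [|e s IHs] M eqAB //=.
have -> : greedy_step A M e = greedy_step B M e.
  by rewrite /greedy_step eqAB ?mem_head.
by apply: IHs => f fs; apply: eqAB; rewrite inE fs orbT.
Qed.

End Greedy.

Section BernoulliLaw.
Variables (V : finType) (E : {set {set V}}) (p : R).
Hypotheses (p_ge0 : 0 <= p) (p_le1 : p <= 1).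

Definition bern_weight (f : {set V}) (b : bool) : R :=
  if f \in E then (if b then p else 1 - p) else (~~ b)%:R.

Definition bern_law (T : edge_ind V) : R := \prod_f bern_weight f (T f).

Definition bern_exp (phi : edge_ind V -> R) : R := \sum_T bern_law T * phi T.

Lemma bern_law_ge0 T : 0 <= bern_law T.
Proof.
apply: prodr_ge0 => f _; rewrite /bern_weight.
by case: ifP => _; case: (T f); rewrite ?subr_ge0.
Qed.

Lemma bern_exp1 : bern_exp (fun _ => 1) = 1.
Proof.
rewrite /bern_exp; under eq_bigr do rewrite mulr1.
rewrite /bern_law -(bigA_distr_bigA bern_weight) /=.
by apply: big1 => f _; rewrite big_bool /bern_weight; case: ifP => _ /=; ring.
Qed.

Lemma bern_expB (f g : edge_ind V -> R) :
  bern_exp (fun T => f T - g T) = bern_exp f - bern_exp g.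
Proof. by rewrite /bern_exp -sumrB; apply: eq_bigr => T _; rewrite mulrBr. Qed.

Lemma bern_exp_indicator_ge0_le1 (b : edge_ind V -> bool) :
  0 <= bern_exp (fun T => (b T)%:R) <= 1.
Proof.
apply/andP; split.
  by apply: sumr_ge0 => T _; rewrite mulr_ge0 ?bern_law_ge0.
rewrite -[leRHS]bern_exp1; apply: ler_sum => T _.
by rewrite ler_wpM2l ?bern_law_ge0 ?lern1 ?leq_b1.
Qed.

Definition toggle (e : {set V}) (T : edge_ind V) : edge_ind V :=
  [ffun f => if f == e then ~~ T e else T f].

Lemma toggleK e : involutive (toggle e).
Proof.
move=> T; apply/ffunP => f; rewrite !ffunE.
by case: eqP => [->|//]; rewrite eqxx negbK.
Qed.

Lemma bern_exp_indep e (g : bool -> R) (phi : edge_ind V -> R) :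
  e \in E -> (forall T, phi (toggle e T) = phi T) ->
  bern_exp (fun T => g (T e) * phi T) =
  ((1 - p) * g false + p * g true) * bern_exp phi.
Proof.
move=> eE phi_toggle.
pose rest (T : edge_ind V) := \prod_(f | f != e) bern_weight f (T f).
have bern_lawE T : bern_law T = bern_weight e (T e) * rest T.
  by rewrite /bern_law (bigD1 e).
have toggle_e T : toggle e T e = ~~ T e by rewrite ffunE eqxx.
have rest_toggle T : rest (toggle e T) = rest T.
  by apply: eq_bigr => f /negbTE fe; rewrite ffunE fe.
have pair_toggle (h : bool -> R) : bern_exp (fun T => h (T e) * phi T) =
    ((1 - p) * h false + p * h true) *
    \sum_(T : edge_ind V | ~~ T e) rest T * phi T.
  rewrite /bern_exp (bigID (fun T : edge_ind V => T e)) /=.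
  rewrite (reindex (toggle e)) /=; last first.
    by exists (toggle e) => T _; rewrite toggleK.
  under eq_bigl do rewrite toggle_e.
  rewrite -big_split /= mulr_sumr; apply: eq_bigr => T /negbTE Te.
  rewrite !bern_lawE toggle_e Te rest_toggle phi_toggle /bern_weight eE /=.
  ring.
rewrite pair_toggle; congr (_ * _).
have := pair_toggle (fun _ => 1); rewrite !mulr1 subrK mul1r => <-.
by apply: eq_bigr => T _; rewrite mul1r.
Qed.

End BernoulliLaw.

Lemma natr_div_ge0 (m n : nat) : 0 <= m%:R / n%:R :> R.
Proof. by rewrite divr_ge0. Qed.

Lemma natr_div_le1 (m n : nat) : leq m n -> m%:R / n%:R <= 1 :> R.
Proof.
case: n => [|n] m_le_n; first by rewrite invr0 mulr0.
by rewrite ler_pdivrMr ?ltr0n // mul1r ler_nat.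
Qed.

Lemma bernoulli_le1 (x : R) (n : nat) :
  0 <= x -> x <= 1 -> (1 - x) ^+ n * (1 + n%:R * x) <= 1.
Proof.
move=> x_ge0 x_le1; elim: n => [|n IHn].
  by rewrite mul0r addr0 mulr1.
have y_ge0 : 0 <= (1 - x) ^+ n by rewrite exprn_ge0 // subr_ge0.
apply: le_trans IHn; rewrite exprS -mulrA mulrCA ler_wpM2l // -natr1.
have n_ge0 : 0 <= n%:R :> R by [].
nra.
Qed.

(* [S] is the probability that an edge is free for a machine and [p = c/k] the
   probability that a machine receives it. *)
Lemma lost_prob_le (k c : nat) (S : R) : leq 2 c -> leq c k -> 0 <= S <= 1 ->
  (1 - c%:R / k%:R) * S * (1 - c%:R / k%:R * S) ^+ (k - 1) <= 2 / c%:R.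
Proof.
move=> c_ge2 c_le_k /andP[S_ge0 S_le1].
have k_ge2 : leq 2 k by apply: leq_trans c_le_k.
have c_gt0 : 0 < c%:R :> R by rewrite ltr0n; apply: leq_trans c_ge2.
have k_gt0 : 0 < k%:R :> R by rewrite ltr0n; apply: leq_trans k_ge2.
have k_ge2R : 2 <= k%:R :> R by rewrite (ler_nat R 2).
set p := c%:R / k%:R.
have p_ge0 : 0 <= p := natr_div_ge0 c k.
have p_le1 : p <= 1 := natr_div_le1 c_le_k.
have pk : p * k%:R = c%:R by rewrite mulfVK ?gt_eqF.
have pS_ge0 : 0 <= p * S by rewrite mulr_ge0.
have pS_le1 : p * S <= 1 by nra.
set y := _ ^+ _.
have y_ge0 : 0 <= y by rewrite exprn_ge0 // subr_ge0.
have := bernoulli_le1 (k - 1) pS_ge0 pS_le1.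
rewrite -/y natrB ?(leq_trans _ k_ge2) // => bern.
(* [x (1 - x)^(k-1) <= 1/(k-1) <= 2/k] for [x = p S] *)
have pSy_le : p * S * y * k%:R <= 2 by nra.
rewrite ler_pdivlMr //; nra.
Qed.

Lemma ln_nat_ge_half (c : nat) : leq 2 c -> 1 / 2 < Rpower.ln c%:R.
Proof.
move=> c_ge2; apply: (@lt_le_trans _ _ (Rpower.ln 2%:R)).
  have /RltP := Rpower.ln_lt_2.
  by rewrite RinvE mul1r (_ : IZR _ = 2%:R) // RealsE.
move: c_ge2; rewrite leq_eqVlt => /orP[/eqP <- //|c_gt2].
by apply/ltW/RltP/Rpower.ln_increasing; apply/RltP; rewrite ?ltr_nat.
Qed.

Section Clustering.
Variables (V : finType) (k : nat).

Definition machine_indicators (X : clustering V k) :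
    {ffun 'I_k -> edge_ind V} :=
  [ffun i => [ffun f => i \in X f]].

Lemma machine_indicators_bij : bijective machine_indicators.
Proof.
pose of_indicators (Y : {ffun 'I_k -> edge_ind V}) : clustering V k :=
  [ffun f => [set i | Y i f]].
exists of_indicators => [X|Y].
  by apply/ffunP => f; apply/setP => i; rewrite !ffunE inE !ffunE.
by apply/ffunP => i; apply/ffunP => f; rewrite !ffunE inE.
Qed.

Lemma machine_edgesE E X i :
  machine_edges E X i = [set f in E | machine_indicators X i f].
Proof. by apply/setP => f; rewrite !inE !ffunE. Qed.

(* Drawing [Bin(k, p)] machines and then a uniform set of that size is the
   same as choosing each machine independently with probability [p]. *)
Lemma edge_set_prob_prod c (S : {set 'I_k}) :
  edge_set_prob c S =
  \prod_(i < k) (if i \in S then c%:R / k%:R else 1 - c%:R / k%:R).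
Proof.
set p := c%:R / k%:R.
have S_le_k : leq #|S| k by have := max_card S; rewrite card_ord.
have binS_neq0 : ('C(k, #|S|))%:R != 0 :> R by rewrite pnatr_eq0 -lt0n bin_gt0.
rewrite (bigID (mem S)) /= (eq_bigr (fun _ => p)); last by move=> i ->.
rewrite [X in _ * X](eq_bigr (fun _ => 1 - p)); last by move=> i /negbTE ->.
rewrite !prodr_const.
have -> : #|[pred i | i \notin S]| = (k - #|S|)%nat.
  have -> : #|[pred i | i \notin S]| = #|~: S|.
    by apply: eq_card => i; rewrite !inE.
  by rewrite cardsCs setCK card_ord.
rewrite /edge_set_prob /binom_pmf !RdivE !RmultE -/p.
by rewrite [_ / _]mulrC !mulrA mulVf // mul1r.
Qed.

Lemma eq_set0_prod (S : {set 'I_k}) :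
  (S == set0)%:R = \prod_(i < k) (i \notin S)%:R :> R.
Proof.
have [->|[i iS]] := set_0Vmem S.
  by rewrite eqxx big1 // => i _; rewrite inE.
have /negbTE -> : S != set0 by apply/set0Pn; exists i.
by rewrite (bigD1 i) //= iS mul0r.
Qed.

Lemma clustering_prob_prod E c X :
  clustering_prob E c X =
  \prod_(i < k) bern_law E (c%:R / k%:R) (machine_indicators X i).
Proof.
rewrite /bern_law; under [RHS]eq_bigr do under eq_bigr do rewrite !ffunE.
rewrite exchange_big /= (bigID (mem E)) /=; congr (_ * _).
  apply: eq_bigr => f fE; rewrite edge_set_prob_prod.
  by apply: eq_bigr => i _; rewrite /bern_weight fE.
apply: eq_big => f; first by rewrite inE.
rewrite inE => /negbTE fE; rewrite eq_set0_prod.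
by apply: eq_bigr => i _; rewrite /bern_weight fE.
Qed.

Lemma Exp_prod_machines E c (h : 'I_k -> edge_ind V -> R) :
  Exp E c (fun X => \prod_(i < k) h i (machine_indicators X i)) =
  \prod_(i < k) bern_exp E (c%:R / k%:R) (h i).
Proof.
rewrite /Exp /bern_exp.
rewrite (bigA_distr_bigA (fun i T => bern_law E (c%:R / k%:R) T * h i T)) /=.
rewrite [RHS](reindex machine_indicators) /=; last first.
  exact/onW_bij/machine_indicators_bij.
by apply: eq_bigr => X _; rewrite clustering_prob_prod -big_split.
Qed.

Lemma ler_Exp E c (f g : clustering V k -> R) : leq c k ->
  (forall X, f X <= g X) -> Exp E c f <= Exp E c g.
Proof.
move=> c_le_k f_le_g; apply: ler_sum => X _.
rewrite ler_wpM2l // clustering_prob_prod; apply: prodr_ge0 => i _.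
exact: bern_law_ge0 (natr_div_ge0 _ _) (natr_div_le1 c_le_k) _.
Qed.

Lemma eq_Exp E c (f g : clustering V k -> R) : f =1 g -> Exp E c f = Exp E c g.
Proof. by move=> eq_fg; apply: eq_bigr => X _; rewrite eq_fg. Qed.

Lemma ExpB E c (f g : clustering V k -> R) :
  Exp E c (fun X => f X - g X) = Exp E c f - Exp E c g.
Proof. by rewrite /Exp -sumrB; apply: eq_bigr => X _; rewrite mulrBr. Qed.

Lemma Exp_wsum E c (A : {set {set V}}) (a : {set V} -> R)
    (f : {set V} -> clustering V k -> R) :
  Exp E c (fun X => \sum_(e in A) a e * f e X) =
  \sum_(e in A) a e * Exp E c (f e).
Proof.
rewrite /Exp; under eq_bigr do rewrite mulr_sumr.
rewrite exchange_big; apply: eq_bigr => e _; rewrite mulr_sumr.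
by apply: eq_bigr => X _; rewrite mulrCA.
Qed.

End Clustering.

Section LostFreeEdge.
Variables (V : finType) (k : nat) (E : {set {set V}}) (pi : seq {set V}).
Variables (Mstar : {set {set V}}) (i1 : 'I_k) (e : {set V}).
Hypotheses (eE : e \in E) (e_pi : e \in pi).
Implicit Type X : clustering V k.

Definition free_before (T : edge_ind V) : bool :=
  [disjoint e & cover (greedy [set f in E | T f] (take (index e pi) pi))].

Lemma free_before_toggle T : free_before (toggle e T) = free_before T.
Proof.
rewrite /free_before (@eq_in_greedy _ _ [set f in E | T f]) // => f f_before.
rewrite !inE ffunE; case: eqP => // fe.
by move: f_before; rewrite fe (in_take _ e_pi) ltnn.
Qed.

Lemma free_before_machine X i :
  free_before (machine_indicators X i) =
  [disjoint e & cover (greedy_before (machine_edges E X i) pi e)].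
Proof. by rewrite /greedy_before machine_edgesE. Qed.

(* An edge that is free for machine [i] and assigned to it is taken by
   Greedy, hence lies in [H]. *)
Lemma lost_free_edge_machines X :
  e \in free_edges E pi Mstar X i1 -> e \notin H_edges E pi X ->
  forall i,
  ~~ (machine_indicators X i e && free_before (machine_indicators X i)).
Proof.
move=> _ e_notin_H i; apply: contra e_notin_H => /andP[e_i e_free].
apply/bigcupP; exists i => //; apply: mem_greedy => //.
  by rewrite machine_edgesE inE eE.
by rewrite -free_before_machine.
Qed.

Definition miss_indicator (i : 'I_k) (T : edge_ind V) : bool :=
  if i == i1 then ~~ T e && free_before T else ~~ (T e && free_before T).

Lemma lost_free_edge_le_prod X :
  ((e \in free_edges E pi Mstar X i1) && (e \notin H_edges E pi X))%:R <=
  \prod_(i < k) (miss_indicator i (machine_indicators X i))%:R :> R.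
Proof.
case: andP => [[e_free e_notin_H]|_]; last by rewrite prodr_ge0.
have free1 : free_before (machine_indicators X i1).
  by move: e_free; rewrite inE -free_before_machine => /andP[].
rewrite big1 // => i _; rewrite /miss_indicator.
have := lost_free_edge_machines e_free e_notin_H i.
by case: eqP => [->|_ ->] //; rewrite free1 !andbT => ->.
Qed.

Lemma Exp_lost_free_edge c : leq 2 c -> leq c k ->
  Exp E c (fun X =>
    ((e \in free_edges E pi Mstar X i1) && (e \notin H_edges E pi X))%:R)
  <= 2 / c%:R.
Proof.
move=> c_ge2 c_le_k.
pose p : R := c%:R / k%:R.
set S := bern_exp E p (fun T => (free_before T)%:R).
have indep (g : bool -> R) :
    bern_exp E p (fun T => g (T e) * (free_before T)%:R) =
    ((1 - p) * g false + p * g true) * S.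
  by apply: bern_exp_indep => // T; rewrite free_before_toggle.
have miss_i1 : bern_exp E p (fun T => (miss_indicator i1 T)%:R) = (1 - p) * S.
  transitivity (bern_exp E p (fun T => (~~ T e)%:R * (free_before T)%:R)).
    apply: eq_bigr => T _; congr (_ * _).
    by rewrite /miss_indicator eqxx; case: (T e); rewrite ?mul0r ?mul1r.
  by rewrite (indep (fun b => (~~ b)%:R)) mulr1 mulr0 addr0.
have miss_other i : i != i1 ->
    bern_exp E p (fun T => (miss_indicator i T)%:R) = 1 - p * S.
  move=> /negbTE i_ne_i1.
  transitivity (bern_exp E p (fun T => 1 - (T e)%:R * (free_before T)%:R)).
    apply: eq_bigr => T _; congr (_ * _); rewrite /miss_indicator i_ne_i1.
    by case: (T e); case: free_before; rewrite /= ?mulr1 ?mulr0 ?subrr ?subr0.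
  by rewrite bern_expB bern_exp1 (indep (fun b => b%:R)) mulr0 mulr1 add0r.
apply: le_trans (ler_Exp E c_le_k lost_free_edge_le_prod) _.
rewrite (Exp_prod_machines E c (fun i T => (miss_indicator i T)%:R)).
rewrite (bigD1 i1) //= miss_i1.
rewrite (eq_bigr (fun _ => 1 - p * S)) ?prodr_const; last first.
  by move=> i /miss_other.
rewrite cardC1 card_ord -subn1; apply: lost_prob_le => //.
exact: bern_exp_indicator_ge0_le1 (natr_div_ge0 c k) (natr_div_le1 c_le_k) _.
Qed.

End LostFreeEdge.

Lemma wtB_setI (V : finType) (w : {set V} -> R) (M F H : {set {set V}}) :
  F \subset M ->
  wt w F - wt w (F :&: H) = \sum_(e in M) w e * ((e \in F) && (e \notin H))%:R.
Proof.
move=> /subsetP F_M; rewrite /wt (big_setID H) /= addrC addrK.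
rewrite big_mkcond [RHS]big_mkcond; apply: eq_bigr => e _; rewrite !inE.
have [/F_M -> | _] := boolP (e \in F); last first.
  by rewrite andbF /= mulr0n mulr0 if_same.
by case: (e \in H); rewrite /= ?mulr1 ?mulr0.
Qed.

Lemma wt_le_opt (V : finType) (E M : {set {set V}}) (w : {set V} -> R) :
  is_matching E M -> wt w M <= opt E w.
Proof. exact: le_bigmax_cond. Qed.

Theorem lemma3p4 :
  exists C : R, 0 < C /\
  forall (V : finType) (E : {set {set V}}) (w : {set V} -> R)
         (k c : nat) (pi : seq {set V}) (Mstar : {set {set V}}) (i1 : 'I_k),
    simple_graph E ->
    (forall e, e \in E -> 0 <= w e) ->
    leq 2 c -> leq c k ->
    nonincreasing_order E w pi ->
    is_max_weight_matching E w Mstar ->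
    val i1 = O ->
    Exp E c (fun X => wt w (free_edges E pi Mstar X i1 :&: H_edges E pi X))
      >= Exp E c (fun X => wt w (free_edges E pi Mstar X i1))
         - C * (Rpower.ln c%:R / c%:R) * opt E w.
Proof.
(* Neither simplicity of [E], nor the order of [pi], nor the choice of the
   machine matters. *)
exists 4; split=> // V E w k c pi Mstar i1 _ w_ge0 c_ge2 c_le_k [_ pi_E _].
move=> [Mstar_matching _] _.
have /subsetP Mstar_E : Mstar \subset E by case/andP: Mstar_matching.
have c_gt0 : 0 < c%:R :> R by rewrite ltr0n; apply: leq_trans c_ge2.
have free_sub X : free_edges E pi Mstar X i1 \subset Mstar.
  by apply/subsetP => e; rewrite inE => /andP[].
have lost_le : Exp E c (fun X => wt w (free_edges E pi Mstar X i1)) -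
    Exp E c (fun X => wt w (free_edges E pi Mstar X i1 :&: H_edges E pi X))
    <= 2 / c%:R * wt w Mstar.
  rewrite -ExpB.
  rewrite (eq_Exp _ _ (fun X => wtB_setI w (H_edges E pi X) (free_sub X))).
  rewrite Exp_wsum /wt mulr_sumr; apply: ler_sum => e e_Mstar.
  have eE := Mstar_E e e_Mstar.
  by rewrite mulrC ler_wpM2r ?w_ge0 // Exp_lost_free_edge ?pi_E.
have Mstar_ge0 : 0 <= wt w Mstar by apply: sumr_ge0 => e /Mstar_E /w_ge0.
have Mstar_le_opt := wt_le_opt w Mstar_matching.
have two_div_le : 2 / c%:R <= 4 * (Rpower.ln c%:R / c%:R).
  by rewrite mulrA ler_pM2r ?invr_gt0 //; have := ln_nat_ge_half c_ge2; lra.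
have two_div_ge0 : 0 <= 2 / c%:R :> R by rewrite divr_ge0 // ltW.
nra.
Qed.
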